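(* Let $K\ge 1$, $n_1,\ldots,n_K$ be positive integers, $\Omega\subseteq\{1,\ldots,n_1\}\times\cdots\times\{1,\ldots,n_K\}$ an index set, $\mathcal{Y}_\Omega\in\mathbb{R}^{n_1\times\cdots\times n_K}$ a tensor supported on $\Omega$, $C>0$ and $\lambda_1,\ldots,\lambda_K>0$. Consider the nonnegative low-rank tensor completion problem $$\min_{\substack{\Theta_k\in\mathcal{P}^{n_k},\ \mathcal{W}^{(k)}\in\mathbb{R}^{n_1\times\cdots\times n_K}\\ k\in\{1,\ldots,K\}}}\ C\,\big\|\mathcal{W}_\Omega-\mathcal{Y}_\Omega\big\|^2+\sum_{k=1}^K\frac{1}{2\lambda_k}\big\langle \Theta_k^{\dagger}W^{(k)}_k,\,W^{(k)}_k\big\rangle\quad\text{subject to}\quad \mathcal{W}\ge 0,$$ where $\mathcal{W}=\sum_{k=1}^K\mathcal{W}^{(k)}$. An equivalent partial dual formulation of this problem is $$\min_{\substack{\Theta_k\in\mathcal{P}^{n_k}\\ k\in\{1,\ldots,K\}}}\ \max_{\substack{\mathcal{Z}\in\mathcal{C}\\ \mathcal{S}\in\mathbb{R}_+^{n_1\times\cdots\times n_K}}}\ \langle\mathcal{Z},\mathcal{Y}_\Omega\rangle-\frac{1}{4C}\|\mathcal{Z}\|^2-\sum_{k=1}^K\frac{\lambda_k}{2}\big\langle Z_k+S_k,\ \Theta_k(Z_k+S_k)\big\rangle,$$ where $\mathcal{C}=\{\mathcal{Z}\in\mathbb{R}^{n_1\times\cdots\times n_K}:\ \mathcal{Z}=\mathcal{Z}_\Omega\}$;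 here $\mathcal{Z}$ is the dual tensor variable corresponding to the primal problem and $\mathcal{S}$ is the dual tensor variable corresponding to the nonnegativity constraint $\mathcal{W}\ge 0$.
   Context: For a tensor $\mathcal{W}\in\mathbb{R}^{n_1\times\cdots\times n_K}$, $\mathcal{W}_\Omega$ denotes the tensor with $(\mathcal{W}_\Omega)_{i_1,\ldots,i_K}=\mathcal{W}_{i_1,\ldots,i_K}$ if $(i_1,\ldots,i_K)\in\Omega$ and $0$ otherwise. The inner product of two same-sized tensors (or matrices) is $\langle\mathcal{W},\mathcal{U}\rangle=\sum_{i_1,\ldots,i_K}\mathcal{W}_{i_1,\ldots,i_K}\mathcal{U}_{i_1,\ldots,i_K}$, and $\|\cdot\|$ is the induced (Frobenius) norm. $\mathcal{W}\ge 0$ means all entries are nonnegative, and $\mathbb{R}_+^{n_1\times\cdots\times n_K}$ is the set of entrywise nonnegative tensors. For a tensor $\mathcal{W}$, the mode-$k$ unfolding $W_k\in\mathbb{R}^{n_k\times n_1\cdots n_{k-1}n_{k+1}\cdots n_K}$ is the matrix whose columns are the mode-$k$ fibers $\mathcal{W}_{i_1,\ldots,i_{k-1},:,i_{k+1},\ldots,i_K}$; thus $W^{(k)}_k$, $Z_k$, $S_k$ are the mode-$k$ unfoldings of $\mathcal{W}^{(k)}$, $\mathcal{Z}$, $\mathcal{S}$ respectively. $\mathcal{P}^d=\{\Theta\in\mathbb{R}^{d\times d}:\ \Theta\succeq 0,\ \mathrm{tr}(\Theta)=1\}$, and $\Theta^\dagger$ denotes the Moore–Penrose pseudo-inverse of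 $\Theta$. *)

From HB Require Import structures.
From mathcomp Require Import all_boot all_order all_algebra.
From mathcomp Require Import boolp classical_sets reals constructive_ereal ereal.
Set Implicit Arguments. Unset Strict Implicit. Unset Printing Implicit Defensive.
Import Order.TTheory GRing.Theory Num.Theory.
Local Open Scope ring_scope.

Section Tensors.
Variables (R : realType) (K : nat) (n : 'I_K -> nat).

Definition idx := {dffun forall k : 'I_K, 'I_(n k)}.
Definition tensor := idx -> R.

Definition restr (Om : {set idx}) (W : tensor) : tensor :=
  fun i => if i \in Om then W i else 0.

Definition tdot (W U : tensor) : R := \sum_(i : idx) W i * U i.
Definition tnorm2 (W : tensor) : R := tdot W W.
Definition tnonneg (W : tensor) : Prop := forall i, 0 <= W i.

(* indices of the modes other than k, indexing the columns of the mode-k unfolding *)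
Definition coli (k : 'I_K) :=
  {dffun forall j : {j : 'I_K | j != k}, 'I_(n (val j))}.

(* the multi-index with k-th coordinate a and other coordinates c *)
Definition merge (k : 'I_K) (a : 'I_(n k)) (c : coli k) : idx :=
  @finfun _ (fun j : 'I_K => 'I_(n j)) (fun j : 'I_K =>
    match (j =P k) with
    | ReflectT e => eq_rect_r (fun j => 'I_(n j)) a e
    | ReflectF ne => c (exist _ j (introN eqP ne))
    end).

(* mode-k unfolding: columns are the mode-k fibers *)
Definition unfold (k : 'I_K) (W : tensor) : 'M[R]_(n k, #|{: coli k}|) :=
  \matrix_(a < n k, c < #|{: coli k}|) W (merge a (enum_val c)).

End Tensors.

Definition mxdot (R : realType) (p q : nat) (A B : 'M[R]_(p, q)) : R :=
  \sum_(i < p) \sum_(j < q) A i j * B i j.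

Definition psd (R : realType) (d : nat) (A : 'M[R]_d) : Prop :=
  A^T = A /\ forall v : 'cV[R]_d, 0 <= (v^T *m A *m v) 0 0.

Definition Pset (R : realType) (d : nat) (A : 'M[R]_d) : Prop :=
  psd A /\ \tr A = 1.

Definition is_MP (R : realType) (d : nat) (A X : 'M[R]_d) : Prop :=
  [/\ A *m X *m A = A, X *m A *m X = X, (A *m X)^T = A *m X & (X *m A)^T = X *m A].
Definition MPinv (R : realType) (d : nat) (A : 'M[R]_d) : 'M[R]_d :=
  xget 0 [set X | is_MP A X].

(* <Theta^dagger V, V>, with the standard convention that it is +oo unless the
   columns of V lie in the range of Theta *)
Definition pinv_quad (R : realType) (d m : nat) (Th : 'M[R]_d) (V : 'M[R]_(d, m))
  : \bar R :=
  if (V^T <= Th^T)%MS then (mxdot (MPinv Th *m V) V)%:E else +oo%E.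

Definition primal_obj (R : realType) (K : nat) (n : 'I_K -> nat)
  (Om : {set idx n}) (Y : tensor R n) (C : R) (lam : 'I_K -> R)
  (Th : forall k, 'M[R]_(n k)) (Wk : 'I_K -> tensor R n) : \bar R :=
  let W : tensor R n := fun i => \sum_(k < K) Wk k i in
  if `[< tnonneg W >] then
    ((C * tnorm2 (fun i => restr Om W i - restr Om Y i))%:E +
     \sum_(k < K) ((1 / (2 * lam k))%:E * pinv_quad (Th k) (unfold k (Wk k))))%E
  else +oo%E.

Definition dual_obj (R : realType) (K : nat) (n : 'I_K -> nat)
  (Om : {set idx n}) (Y : tensor R n) (C : R) (lam : 'I_K -> R)
  (Th : forall k, 'M[R]_(n k)) (Z S : tensor R n) : R :=
  tdot Z (restr Om Y) - (1 / (4 * C)) * tnorm2 Z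
  - \sum_(k < K) (lam k / 2) *
      mxdot (unfold k Z + unfold k S) (Th k *m (unfold k Z + unfold k S)).

Local Open Scope classical_set_scope.

Definition primal_inner (R : realType) (K : nat) (n : 'I_K -> nat)
  (Om : {set idx n}) (Y : tensor R n) (C : R) (lam : 'I_K -> R)
  (Th : forall k, 'M[R]_(n k)) : \bar R :=
  ereal_inf [set x | exists Wk : 'I_K -> tensor R n, x = primal_obj Om Y C lam Th Wk].

Definition dual_inner (R : realType) (K : nat) (n : 'I_K -> nat)
  (Om : {set idx n}) (Y : tensor R n) (C : R) (lam : 'I_K -> R)
  (Th : forall k, 'M[R]_(n k)) : \bar R :=
  ereal_sup [set x | exists Z S : tensor R n,
    [/\ Z = restr Om Z, tnonneg S & x = (dual_obj Om Y C lam Th Z S)%:E]].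

From Pilot Require Import Defs.
From HB Require Import structures.
From mathcomp Require Import all_boot all_order all_algebra.
From mathcomp Require Import boolp classical_sets reals constructive_ereal ereal.
From mathcomp Require Import ring lra.
Set Implicit Arguments. Unset Strict Implicit. Unset Printing Implicit Defensive.
Import Order.TTheory GRing.Theory Num.Theory.
Local Open Scope ring_scope.

(* Weak duality is Fenchel-Young term by term: complete the square in the
   data-fit term, use <S, W> >= 0 for the multiplier of W >= 0, and for each
   mode <X, W> - (lam/2) <X, Theta X> <= (1/(2 lam)) <Theta^+ W, W> whenever the
   columns of W lie in the range of Theta.
   Conversely, the dual is a concave quadratic in (Z, S), bounded above by weak
   duality, on the polyhedral cone {Z = Z_Omega, S >= 0}, so it attains its
   maximum (Frank-Wolfe: on the span of a face it either has a maximizer or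
   increases along a ray, and a ratio test then moves to a smaller face).
   The first-order conditions at a maximizer say that W = sum_k lam_k Theta_k
   (Z + S)_(k) satisfies W - Y = -Z/(2C) on Omega, W >= 0 and <S, W> = 0, which
   makes its primal value equal to the dual value. Both outer minimizations
   over Theta then range over the same values. *)

Lemma sym_fredholm (F : fieldType) (T : finType) (H : T -> T -> F) (b : T -> F) :
  (forall i j, H i j = H j i) ->
  (exists D : T -> F, forall i, b i = \sum_j H i j * D j) \/
  (exists d : T -> F, (forall i, \sum_j H i j * d j = 0) /\ \sum_i b i * d i != 0).
Proof.
move=> Hsym; pose Hm := \matrix_(i, j < #|T|) H (enum_val i) (enum_val j).
pose bm := \row_(i < #|T|) b (enum_val i).
have [/submxP[D bD] | ] := boolP (bm <= Hm)%MS.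
  left; exists (fun t => D 0 (enum_rank t)) => i.
  move/matrixP: bD => /(_ 0 (enum_rank i)); rewrite !mxE enum_rankK => ->.
  rewrite (big_enum_val (fun t => H i t * D 0 (enum_rank t))) /=.
  by apply: eq_bigr => j _; rewrite !mxE enum_rankK enum_valK Hsym mulrC.
rewrite submxE => nz; right.
have /existsP[j nzj] : [exists j : 'I_#|T|, (bm *m cokermx Hm) 0 j != 0].
  move: nz; apply: contraNT => /existsPn nz0; apply/eqP/matrixP => i k.
  by rewrite ord1 [RHS]mxE; apply/eqP/negPn/nz0.
exists (fun t => cokermx Hm (enum_rank t) j); split.
  move=> i; have /matrixP/(_ (enum_rank i) j) := mulmx_coker Hm.
  rewrite !mxE => cokerE; rewrite -[RHS]cokerE.
  rewrite (big_enum_val (fun t => H i t * cokermx Hm (enum_rank t) j)) /=.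
  by apply: eq_bigr => k _; rewrite [in RHS]mxE enum_valK enum_rankK.
move: nzj; rewrite [(bm *m _) _ _]mxE.
rewrite (big_enum_val (fun t => b t * cokermx Hm (enum_rank t) j)) /=.
congr (_ != _); apply: eq_bigr => k _; by rewrite [bm _ _]mxE enum_valK.
Qed.

Section ConcaveQuadratic.
Variables (R : realFieldType) (T : finType) (H : T -> T -> R) (b : T -> R).
Hypothesis H_sym : forall i j, H i j = H j i.

Definition hmul (x : T -> R) i := \sum_j H i j * x j.
Definition bform (x y : T -> R) := \sum_i x i * hmul y i.
Definition lform (x : T -> R) := \sum_i b i * x i.
Definition qobj x := lform x - bform x x.
Definition shift (x : T -> R) t (d : T -> R) i := x i + t * d i.

Lemma bformC x y : bform x y = bform y x.
Proof.
rewrite /bform /hmul; under eq_bigr do rewrite mulr_sumr.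
under [RHS]eq_bigr do rewrite mulr_sumr.
rewrite exchange_big; apply: eq_bigr => i _; apply: eq_bigr => j _.
by rewrite H_sym; ring.
Qed.

Lemma bform_shiftl x t d y : bform (shift x t d) y = bform x y + t * bform d y.
Proof.
by rewrite /bform mulr_sumr -big_split; apply: eq_bigr => i _; rewrite /shift mulrDl mulrA.
Qed.

Lemma lform_shift x t d : lform (shift x t d) = lform x + t * lform d.
Proof.
by rewrite /lform mulr_sumr -big_split; apply: eq_bigr => i _; rewrite /shift mulrDr mulrCA.
Qed.

Lemma qobj_shift x t d :
  qobj (shift x t d) = qobj x + t * (lform d - 2 * bform x d) - t ^ 2 * bform d d.
Proof.
rewrite /qobj lform_shift !bform_shiftl !(bformC _ (shift _ _ _)) !bform_shiftl.
by rewrite (bformC d x); ring.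
Qed.

Hypothesis H_psd : forall x, 0 <= bform x x.

Lemma qobj_segment x d t : 0 <= t <= 1 ->
  qobj x <= qobj (shift x 1 d) -> qobj x <= qobj (shift x t d).
Proof.
case/andP=> t0 t1; rewrite !qobj_shift => le1.
have q0 := H_psd d; set g := _ - 2 * _ in le1 *; set q := bform d d in le1 q0 *.
have : 0 <= t * (g - q) + t * (1 - t) * q.
  by rewrite addr_ge0 // ?mulr_ge0 // ?subr_ge0 //; lra.
lra.
Qed.

Definition supported (F : {set T}) (x : T -> R) := forall i, i \notin F -> x i = 0.

Lemma bform_supported0 (F : {set T}) y d :
  (forall i, i \in F -> hmul d i = 0) -> supported F y -> bform y d = 0.
Proof.
move=> Hd Fy; rewrite /bform big1 // => i _.
by case: (boolP (i \in F)) => iF; [rewrite Hd ?mulr0 | rewrite Fy ?mul0r].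
Qed.

(* Fredholm alternative for the restriction of [H] and [b] to [F]. *)
Lemma face_max_or_ray (F : {set T}) :
  (exists z, supported F z /\ forall y, supported F y -> qobj y <= qobj z) \/
  (exists2 d, supported F d & exists2 a, 0 < a &
     forall y t, supported F y -> qobj (shift y t d) = qobj y + t * a).
Proof.
pose HF i j := if (i \in F) && (j \in F) then H i j else 0.
pose bF i := if i \in F then b i else 0.
have HF_sym i j : HF i j = HF j i by rewrite /HF andbC H_sym.
case: (sym_fredholm bF HF_sym) => [[D bD] | [d0 [d0H nz]]].
- left; pose z i := if i \in F then D i / 2 else 0.
  have Fz : supported F z by move=> i /negbTE iF; rewrite /z iF.
  have Hz i : i \in F -> hmul z i = b i / 2.
    move=> iF; have := bD i; rewrite /bF iF => ->; rewrite mulr_suml.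
    by apply: eq_bigr => j _; rewrite /HF /z iF; case: (j \in F) => /=; ring.
  exists z; split=> // y Fy; pose d i := y i - z i.
  have -> : y = shift z 1 d by apply/funext => i; rewrite /shift /d; ring.
  rewrite qobj_shift.
  have -> : lform d - 2 * bform z d = 0.
    rewrite bformC /lform /bform mulr_sumr -sumrB big1 // => i _.
    case: (boolP (i \in F)) => iF; first by rewrite Hz //; field.
    by rewrite /d Fy // Fz //; ring.
  have := H_psd d; lra.
- right; set s := \sum_i bF i * d0 i in nz.
  pose d i := if i \in F then s * d0 i else 0.
  have Fd : supported F d by move=> i /negbTE iF; rewrite /d iF.
  have Hd i : i \in F -> hmul d i = 0.
    move=> iF; rewrite -(mulr0 s) -(d0H i) mulr_sumr.
    by apply: eq_bigr => j _; rewrite /d /HF iF; case: (j \in F) => /=; ring.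
  exists d => //; exists (s * s); first by rewrite lt_def mulf_neq0 //= -expr2 sqr_ge0.
  move=> y t Fy; rewrite qobj_shift (bform_supported0 Hd Fy) (bform_supported0 Hd Fd).
  suff -> : lform d = s * s by ring.
  rewrite {2}/s /lform mulr_sumr; apply: eq_bigr => i _.
  by rewrite /d /bF; case: (i \in F) => /=; ring.
Qed.

Variables (E I : {set T}).

Definition in_cone (x : T -> R) :=
  (forall i, i \in E -> x i = 0) /\ (forall i, i \in I -> 0 <= x i).
Definition supp (x : T -> R) := [set i | x i != 0].

Lemma supported_supp x : supported (supp x) x.
Proof. by move=> i; rewrite inE negbK => /eqP. Qed.

Lemma supp_shift_subset x t d : supported (supp x) d -> supp (shift x t d) \subset supp x.
Proof.
move=> Fd; apply/fintype.subsetP => i; rewrite !inE; apply: contraNN => /eqP xi0.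
by rewrite /shift xi0 Fd ?inE ?xi0 ?eqxx // mulr0 addr0.
Qed.

Lemma ratio_step x d i0 : in_cone x -> supported (supp x) d -> i0 \in I -> d i0 < 0 ->
  exists t, [/\ 0 < t, t * - d i0 <= x i0, in_cone (shift x t d) &
                (#|supp (shift x t d)| < #|supp x|)%N].
Proof.
move=> [PE PI] Fd Ii0 di0.
have : (i0 \in I) && (d i0 < 0) by rewrite Ii0 di0.
case/(arg_minP (fun j => x j / - d j) (P := fun j => (j \in I) && (d j < 0))).
move=> j /andP[Ij dj] jmin.
have xj : 0 < x j.
  rewrite lt_def PI // andbT; apply: contraTneq dj => xj0.
  by rewrite Fd ?ltxx // inE xj0 eqxx.
have ndj : 0 < - d j by rewrite oppr_gt0.
exists (x j / - d j); split.
- exact: divr_gt0.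
- by rewrite -ler_pdivlMr ?oppr_gt0 // jmin ?Ii0.
- split=> i Hi.
    by have xi := PE i Hi; rewrite /shift xi (Fd i) ?mulr0 ?addr0 // inE xi eqxx.
  case: (leP 0 (d i)) => di.
    by rewrite /shift addr_ge0 ?PI // mulr_ge0 // ?divr_ge0 // ltW.
  have := jmin i; rewrite Hi di => /(_ isT).
  rewrite ler_pdivlMr ?oppr_gt0 // /shift => h; lra.
- apply: proper_card; rewrite finset.properEneq supp_shift_subset // andbT.
  have xj' : shift x (x j / - d j) d j = 0 by rewrite /shift; field; rewrite lt_eqF.
  by apply/eqP => /setP/(_ j); rewrite !inE xj' eqxx gt_eqF.
Qed.

Definition face_max (F : {set T}) z :=
  [/\ supported F z, in_cone z & forall y, supported F y -> qobj y <= qobj z].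
Definition dominated x := exists F z, face_max F z /\ qobj x <= qobj z.

Hypothesis qobj_bounded : exists M, forall x, in_cone x -> qobj x <= M.

Section DominationStep.
Variable x : T -> R.
Hypotheses (x_cone : in_cone x)
  (IH : forall x', in_cone x' -> (#|supp x'| < #|supp x|)%N -> dominated x').

Lemma dominated_of_face_argmax z : supported (supp x) z ->
  (forall y, supported (supp x) y -> qobj y <= qobj z) -> dominated x.
Proof.
move=> Fz zmax; have [PE PI] := x_cone.
case: (boolP [exists i, (i \in I) && (z i < 0)]) => [|/existsPn zI].
  case/existsP=> i0 /andP[Ii0 zi0]; pose d i := z i - x i.
  have Fd : supported (supp x) d.
    by move=> i iS; rewrite /d Fz // supported_supp // subrr.
  have xi0 := PI i0 Ii0.
  have di0 : d i0 < 0 by rewrite /d; lra.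
  have [t [t0 tle x't lt_supp]] := ratio_step x_cone Fd Ii0 di0.
  have t1 : t <= 1.
    have : t * - d i0 <= 1 * - d i0 by rewrite mul1r; apply: le_trans tle _; rewrite /d; lra.
    by rewrite ler_pM2r // oppr_gt0.
  have [F [z' [z'max le_z']]] := IH x't lt_supp.
  exists F, z'; split=> //; apply: le_trans le_z'; apply: qobj_segment.
    by rewrite ltW.
  have -> : shift x 1 d = z by apply/funext => i; rewrite /shift /d; ring.
  exact/zmax/supported_supp.
exists (supp x), z; split; last exact/zmax/supported_supp.
split=> //; split=> i Hi; first by rewrite Fz // inE PE ?eqxx.
by move: (zI i); rewrite Hi /= -leNgt.
Qed.

Lemma dominated_of_ray d a : supported (supp x) d -> 0 < a ->
  (forall y t, supported (supp x) y -> qobj (shift y t d) = qobj y + t * a) ->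
  dominated x.
Proof.
move=> Fd a0 ray; have [PE PI] := x_cone.
case: (boolP [exists i, (i \in I) && (d i < 0)]) => [|/existsPn dI].
  case/existsP=> i0 /andP[Ii0 di0].
  have [t [t0 _ x't lt_supp]] := ratio_step x_cone Fd Ii0 di0.
  have [F [z [zmax le_z]]] := IH x't lt_supp.
  exists F, z; split=> //; apply: le_trans le_z.
  rewrite ray; last exact: supported_supp.
  by have := mulr_gt0 t0 a0; lra.
have [M bndM] := qobj_bounded.
pose t := `|M - qobj x| / a + 1.
have xt_cone : in_cone (shift x t d).
  split=> i Hi.
    by have xi := PE i Hi; rewrite /shift xi (Fd i) ?mulr0 ?addr0 // inE xi eqxx.
  rewrite /shift addr_ge0 ?PI //; apply: mulr_ge0.
    by rewrite addr_ge0 // divr_ge0 // ltW.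
  by move: (dI i); rewrite Hi /= -leNgt.
have := bndM _ xt_cone; rewrite ray; last exact: supported_supp.
rewrite /t mulrDl mul1r divfK ?gt_eqF //.
have := ler_norm (M - qobj x); lra.
Qed.

End DominationStep.

Lemma dominated_cone x : in_cone x -> dominated x.
Proof.
move: {2}#|supp x|.+1 (ltnSn #|supp x|) => m; elim: m x => // m IHm x lt_m x_cone.
have IH x' : in_cone x' -> (#|supp x'| < #|supp x|)%N -> dominated x'.
  by move=> x'_cone lt'; apply: IHm => //; apply: leq_trans lt' _.
case: (face_max_or_ray (supp x)) => [[z [Fz zmax]] | [d Fd [a a0 ray]]].
  exact: dominated_of_face_argmax zmax.
exact: dominated_of_ray ray.
Qed.

Theorem qobj_cone_argmax :
  exists2 xs, in_cone xs & forall x, in_cone x -> qobj x <= qobj xs.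
Proof.
pose zF F := xget (fun=> 0) [set z | face_max F z].
have zF_max F z : face_max F z -> face_max F (zF F).
  by move=> zmax; apply: (xgetPex (fun=> 0)); exists z.
pose good F := `[< exists z, face_max F z >].
have [F0 [z0 [z0max _]]] : dominated (fun=> 0) by apply: dominated_cone.
have gF0 : good F0 by apply/asboolP; exists z0.
case: (arg_maxP (fun F => qobj (zF F)) gF0) => Fs /asboolP[zs /zF_max[_ zFs_cone _]] Fs_max.
exists (zF Fs) => // x /dominated_cone[F [z [zmax le_z]]].
have gF : good F by apply/asboolP; exists z.
have [_ _ zF_opt] := zF_max _ _ zmax; case: zmax => Fz _ _.
by apply: le_trans le_z _; apply: le_trans (zF_opt _ Fz) (Fs_max _ gF).
Qed.

End ConcaveQuadratic.

Section CoefficientForms.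
Variables (R : realFieldType) (T : finType).

Definition delta (i : T) : T -> R := fun j => (i == j)%:R.

Lemma linear_fun_expand (f : (T -> R) -> R) :
  (forall x y, f (fun j => x j + y j) = f x + f y) ->
  (forall a x, f (fun j => a * x j) = a * f x) ->
  forall x, f x = \sum_i x i * f (delta i).
Proof.
move=> fD fZ x; have f0 : f (fun=> 0) = 0.
  have -> : (fun=> 0) = (fun j : T => 0 * (0 : R)) by apply/funext => j; rewrite mul0r.
  by rewrite fZ mul0r.
have fsum (s : seq T) :
    f (fun j => \sum_(i <- s) x i * delta i j) = \sum_(i <- s) x i * f (delta i).
  elim: s => [|i s IH].
    by rewrite big_nil -f0; congr f; apply/funext => j; rewrite big_nil.
  by rewrite big_cons -IH -fZ -fD; congr f; apply/funext => j; rewrite big_cons.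
rewrite -fsum; congr f; apply/funext => j.
by rewrite (bigD1 j) //= /delta eqxx mulr1 big1 ?addr0 // => i /negbTE ->; rewrite mulr0.
Qed.

Lemma lform_coefE (f : (T -> R) -> R) :
  (forall x y, f (fun j => x j + y j) = f x + f y) ->
  (forall a x, f (fun j => a * x j) = a * f x) ->
  forall x, lform (fun i => f (delta i)) x = f x.
Proof.
move=> fD fZ x; rewrite (linear_fun_expand fD fZ x).
by apply: eq_bigr => i _; rewrite mulrC.
Qed.

Lemma bform_coefE (B : (T -> R) -> (T -> R) -> R) :
  (forall x y, B x y = B y x) ->
  (forall x y z, B (fun j => x j + y j) z = B x z + B y z) ->
  (forall a x z, B (fun j => a * x j) z = a * B x z) ->
  forall x y, bform (fun i j => B (delta i) (delta j)) x y = B x y.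
Proof.
move=> BC BD BZ x y.
rewrite (linear_fun_expand (fun x1 x2 => BD x1 x2 y) (fun a x1 => BZ a x1 y) x).
apply: eq_bigr => i _; congr (_ * _); rewrite BC /hmul.
rewrite (linear_fun_expand (fun y1 y2 => BD y1 y2 _) (fun a y1 => BZ a y1 _) y).
by apply: eq_bigr => j _; rewrite mulrC BC.
Qed.

End CoefficientForms.

Arguments delta {R T} i j.

Lemma slope_le0 (R : realFieldType) (g q : R) : 0 <= q ->
  (forall t, 0 < t -> t <= 1 -> t * g - t ^ 2 * q <= 0) -> g <= 0.
Proof.
move=> q0 small_steps; rewrite leNgt; apply/negP => g0.
have gq : 0 < g + q by lra.
have t0 : 0 < g / (g + q) by exact: divr_gt0.
have t1 : g / (g + q) <= 1 by rewrite ler_pdivrMr // mul1r; lra.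
have := small_steps _ t0 t1.
have -> : g / (g + q) * g - (g / (g + q)) ^ 2 * q = g ^ 3 / (g + q) ^ 2.
  by field; rewrite gt_eqF.
by rewrite leNgt => /negP; apply; apply: divr_gt0; rewrite ?exprn_gt0.
Qed.

Lemma row_free_gram_unit (F : realFieldType) r d (M : 'M[F]_(r, d)) :
  row_free M -> M *m M^T \in unitmx.
Proof.
rewrite -kermx_eq0 => /eqP ker0; rewrite -row_free_unit -kermx_eq0.
apply/eqP/row_matrixP => i; rewrite row0; set v := row i _.
have vMMT : v *m (M *m M^T) = 0 by apply/sub_kermxP; rewrite row_sub.
have vM : v *m M = 0.
  have : (v *m M *m (v *m M)^T) 0 0 = 0.
    by rewrite trmx_mul mulmxA -(mulmxA v) vMMT mul0mx mxE.
  rewrite mxE; under eq_bigr do rewrite [_^T _ _]mxE -expr2.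
  move/psumr_eq0P => sq0; apply/rowP => j; rewrite [RHS]mxE.
  by apply/eqP; rewrite -sqrf_eq0 sq0 // => k _; apply: sqr_ge0.
by move/sub_kermxP: vM; rewrite ker0 submx0 => /eqP.
Qed.

Lemma is_MP_full_rank_factor (R : realType) d r (B : 'M[R]_(d, r)) (P : 'M[R]_(r, d)) :
  B^T *m B \in unitmx -> P *m P^T \in unitmx ->
  is_MP (B *m P) (P^T *m invmx (P *m P^T) *m invmx (B^T *m B) *m B^T).
Proof.
move=> uB uP; set X := _ *m B^T.
have symV (M : 'M[R]_r) : M^T = M -> (invmx M)^T = invmx M by move=> MT; rewrite trmx_inv MT.
have AX : B *m P *m X = B *m invmx (B^T *m B) *m B^T.
  by rewrite /X !mulmxA -(mulmxA B P) mulmxK.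
have XA : X *m (B *m P) = P^T *m invmx (P *m P^T) *m P.
  by rewrite /X !mulmxA -(mulmxA _ B^T B) mulmxKV.
split.
- by rewrite AX !mulmxA -(mulmxA _ B^T B) mulmxKV.
- by rewrite XA /X !mulmxA -(mulmxA _ P P^T) mulmxK.
- by rewrite AX !trmx_mul trmxK symV ?trmx_mul ?trmxK // mulmxA.
- by rewrite XA !trmx_mul trmxK symV ?trmx_mul ?trmxK // mulmxA.
Qed.

Lemma MPinv_is_MP (R : realType) d (A : 'M[R]_d) : is_MP A (MPinv A).
Proof.
have uB : (col_base A)^T *m col_base A \in unitmx.
  rewrite -[X in _ *m X]trmxK; apply: row_free_gram_unit.
  by rewrite /row_free mxrank_tr; have := col_base_full A; rewrite /row_full.
have uP : row_base A *m (row_base A)^T \in unitmx.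
  exact/row_free_gram_unit/row_base_free.
rewrite /MPinv; apply: (@xgetPex _ 0 [set X | is_MP A X]).
by rewrite -[X in is_MP X](mulmx_base A); eexists; exact: is_MP_full_rank_factor.
Qed.

Lemma mulmx_MPinvK (R : realType) d (A : 'M[R]_d) : A *m MPinv A *m A = A.
Proof. by case: (MPinv_is_MP A). Qed.

Section MatrixDot.
Variable R : realType.

Lemma mxdotE p q (A B : 'M[R]_(p, q)) : mxdot A B = \tr (A *m B^T).
Proof.
by apply: eq_bigr => i _; rewrite !mxE; apply: eq_bigr => j _; rewrite !mxE.
Qed.

Lemma mxdotC p q (A B : 'M[R]_(p, q)) : mxdot A B = mxdot B A.
Proof. by apply: eq_bigr => i _; apply: eq_bigr => j _; rewrite mulrC. Qed.

Lemma mxdotDl p q (A B D : 'M[R]_(p, q)) : mxdot (A + B) D = mxdot A D + mxdot B D.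
Proof. by rewrite !mxdotE mulmxDl mxtraceD. Qed.

Lemma mxdotZl p q t (A D : 'M[R]_(p, q)) : mxdot (t *: A) D = t * mxdot A D.
Proof. by rewrite !mxdotE -scalemxAl mxtraceZ. Qed.

Lemma mxdotDr p q (A B D : 'M[R]_(p, q)) : mxdot D (A + B) = mxdot D A + mxdot D B.
Proof. by rewrite !(mxdotC D) mxdotDl. Qed.

Lemma mxdotZr p q t (A D : 'M[R]_(p, q)) : mxdot D (t *: A) = t * mxdot D A.
Proof. by rewrite !(mxdotC D) mxdotZl. Qed.

Variables (d q : nat) (Th : 'M[R]_d).

Lemma mxdot_symmx (A B : 'M[R]_(d, q)) : Th^T = Th -> mxdot A (Th *m B) = mxdot B (Th *m A).
Proof.
move=> ThT; rewrite !mxdotE !trmx_mul ThT mxtrace_mulC -mulmxA.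
by rewrite -mxtrace_tr !trmx_mul trmxK ThT mxtrace_mulC.
Qed.

Lemma mxdot_psd_ge0 (A : 'M[R]_(d, q)) : psd Th -> 0 <= mxdot A (Th *m A).
Proof.
case=> _ Th_pos; rewrite mxdotC mxdotE mxtrace_mulC mulmxA.
apply: sumr_ge0 => j _; have := Th_pos (col j A); congr (0 <= _).
rewrite !mxE; apply: eq_bigr => i _; rewrite !mxE; congr (_ * _).
by apply: eq_bigr => k _; rewrite !mxE.
Qed.

Lemma mxdot_MPinv_range (G : 'M[R]_(d, q)) : Th^T = Th ->
  mxdot (MPinv Th *m (Th *m G)) (Th *m G) = mxdot G (Th *m G).
Proof.
move=> ThT; rewrite !mxdotE !trmx_mul ThT.
rewrite (mulmxA (MPinv _ *m _) G^T) mxtrace_mulC !mulmxA mulmx_MPinvK.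
by rewrite -mulmxA mxtrace_mulC.
Qed.

Lemma quad_fenchel_young (lam : R) (U G : 'M[R]_(d, q)) : psd Th -> 0 < lam ->
  (G^T <= Th^T)%MS ->
  mxdot U G - lam / 2 * mxdot U (Th *m U) <= 1 / (2 * lam) * mxdot (MPinv Th *m G) G.
Proof.
move=> Th_psd lam0 /submxP[D GE]; have ThT := Th_psd.1.
have -> : G = Th *m D^T by rewrite -[G]trmxK GE trmx_mul trmxK.
rewrite mxdot_MPinv_range //; set D' := D^T.
have := mxdot_psd_ge0 (D' + (- lam) *: U) Th_psd.
rewrite mulmxDr -scalemxAr !mxdotDl !mxdotDr !mxdotZl !mxdotZr (mxdot_symmx D' U ThT).
set a := mxdot D' _; set b := mxdot U (Th *m D'); set c := mxdot U (Th *m U) => h.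
have : 0 <= 1 / (2 * lam) * (a + - lam * b + (- lam * b + - lam * (- lam * c))).
  by apply: mulr_ge0 h; rewrite divr_ge0 // mulr_ge0 // ltW.
suff -> : 1 / (2 * lam) * (a + - lam * b + (- lam * b + - lam * (- lam * c))) =
  1 / (2 * lam) * a - b + lam / 2 * c by lra.
by field; rewrite gt_eqF.
Qed.

End MatrixDot.

Lemma match_reflect_const (T : Type) (P : Prop) (b : bool) (r : reflect P b)
    (f : P -> T) (g : ~ P -> T) v :
  (forall e, f e = v) -> (forall ne, g ne = v) ->
  match r with ReflectT e => f e | ReflectF ne => g ne end = v.
Proof. by case: r. Qed.

Section Unfolding.
Variables (R : realType) (K : nat) (n : 'I_K -> nat).

Lemma merge_mode k (a : 'I_(n k)) (c : coli n k) : Defs.merge a c k = a.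
Proof.
rewrite /Defs.merge ffunE; apply: match_reflect_const => [e | //].
by rewrite (eq_irrelevance e (erefl k)).
Qed.

Lemma merge_other k (a : 'I_(n k)) (c : coli n k) j (jk : j != k) :
  Defs.merge a c j = c (exist _ j jk).
Proof.
rewrite /Defs.merge ffunE; apply: match_reflect_const => [e | ne]; first by case/eqP: jk.
by rewrite (bool_irrelevance (introN eqP ne) jk).
Qed.

Definition split_idx k (l : idx n) : coli n k :=
  [ffun j : {j : 'I_K | j != k} => l (val j)].

Lemma merge_split k (l : idx n) : Defs.merge (l k) (split_idx k l) = l.
Proof.
apply/ffunP => j; have [-> | jk] := eqVneq j k; first by rewrite merge_mode.
by rewrite (merge_other _ _ jk) ffunE.
Qed.

Lemma split_merge k (a : 'I_(n k)) (c : coli n k) : split_idx k (Defs.merge a c) = c.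
Proof.
by apply/ffunP => -[j jk]; rewrite ffunE (merge_other _ _ jk).
Qed.

Lemma sum_idx_unfold k (F : idx n -> R) :
  \sum_l F l = \sum_(a < n k) \sum_(c < #|{: coli n k}|) F (Defs.merge a (enum_val c)).
Proof.
transitivity (\sum_(a < n k) \sum_(c : coli n k) F (Defs.merge a c)).
  rewrite pair_big /= (reindex (fun p : 'I_(n k) * coli n k => Defs.merge p.1 p.2)) //.
  apply: onW_bij; exists (fun l : idx n => (l k, split_idx k l)) => [[a c] | l] /=.
    by rewrite merge_mode split_merge.
  exact: merge_split.
by apply: eq_bigr => a _; rewrite (big_enum_val (fun c => F (Defs.merge a c))).
Qed.

Definition fold k (M : 'M[R]_(n k, #|{: coli n k}|)) : tensor R n :=
  fun l => M (l k) (enum_rank (split_idx k l)).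

Lemma unfoldK k (M : 'M[R]_(n k, #|{: coli n k}|)) : unfold k (fold M) = M.
Proof. by apply/matrixP => a c; rewrite mxE /fold merge_mode split_merge enum_valK. Qed.

Lemma mxdot_unfold k (A B : tensor R n) : mxdot (unfold k A) (unfold k B) = tdot A B.
Proof.
rewrite /tdot (sum_idx_unfold k); apply: eq_bigr => a _; apply: eq_bigr => c _.
by rewrite !mxE.
Qed.

Lemma unfoldD k (A B : tensor R n) : unfold k (fun l => A l + B l) = unfold k A + unfold k B.
Proof. by apply/matrixP => a c; rewrite !mxE. Qed.

Lemma unfoldZ k t (A : tensor R n) : unfold k (fun l => t * A l) = t *: unfold k A.
Proof. by apply/matrixP => a c; rewrite !mxE. Qed.

End Unfolding.

Section TensorDot.
Variables (R : realType) (K : nat) (n : 'I_K -> nat).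
Implicit Types (A B D : tensor R n).

Lemma tdotC A B : tdot A B = tdot B A.
Proof. by apply: eq_bigr => i _; rewrite mulrC. Qed.

Lemma tdotDl A B D : tdot (fun i => A i + B i) D = tdot A D + tdot B D.
Proof. by rewrite /tdot -big_split; apply: eq_bigr => i _; rewrite mulrDl. Qed.

Lemma tdotZl a A D : tdot (fun i => a * A i) D = a * tdot A D.
Proof. by rewrite /tdot mulr_sumr; apply: eq_bigr => i _; rewrite mulrA. Qed.

Lemma tdot0l A : tdot (fun=> 0) A = 0.
Proof. by rewrite /tdot big1 // => i _; rewrite mul0r. Qed.

Lemma tdot_sumr (F : 'I_K -> tensor R n) D :
  tdot D (fun l => \sum_k F k l) = \sum_k tdot D (F k).
Proof. by rewrite /tdot exchange_big; apply: eq_bigr => i _; rewrite mulr_sumr. Qed.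

Lemma tnorm2_ge0 A : 0 <= tnorm2 A.
Proof. by apply: sumr_ge0 => i _; rewrite -expr2 sqr_ge0. Qed.

Lemma tdot_delta (l : idx n) A : tdot (delta l) A = A l.
Proof.
rewrite /tdot (bigD1 l) //= /delta eqxx mul1r big1 ?addr0 // => i.
by rewrite eq_sym => /negbTE ->; rewrite mul0r.
Qed.

End TensorDot.

Section InnerDuality.
Variables (R : realType) (K : nat) (n : 'I_K -> nat) (Om : {set idx n})
  (Y : tensor R n) (C : R) (lam : 'I_K -> R) (Th : forall k, 'M[R]_(n k)).
Hypotheses (Y_Om : Y = restr Om Y) (C_gt0 : 0 < C) (lam_gt0 : forall k, 0 < lam k)
  (Th_P : forall k, Pset (Th k)).

Let Th_psd k : psd (Th k) := (Th_P k).1.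
Let Th_sym k : (Th k)^T = Th k := (Th_psd k).1.

Local Notation dual := (dual_obj Om Y C lam Th).
Local Notation primal := (primal_obj Om Y C lam Th).

Definition dual_feasible (Z S : tensor R n) := Z = restr Om Z /\ tnonneg S.

Definition quadk k (X : tensor R n) := mxdot (unfold k X) (Th k *m unfold k X).

(* W^(k) = lam_k Theta_k X_(k), the equality case of [quad_fenchel_young]. *)
Definition primal_of k (X : tensor R n) : tensor R n := fold (lam k *: (Th k *m unfold k X)).

Definition primal_sum (X : tensor R n) : tensor R n := fun l => \sum_k primal_of k X l.

Lemma quadk_ge0 k X : 0 <= quadk k X.
Proof. exact: mxdot_psd_ge0. Qed.

Lemma dual_objE Z S : dual Z S =
  tdot Z Y - 1 / (4 * C) * tnorm2 Z - \sum_k lam k / 2 * quadk k (fun l => Z l + S l).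
Proof.
by rewrite /dual_obj -Y_Om; congr (_ - _); apply: eq_bigr => k _; rewrite /quadk unfoldD.
Qed.

Lemma fit_fenchel_young Z W : Z = restr Om Z ->
  tdot Z Y - 1 / (4 * C) * tnorm2 Z - tdot Z W <=
  C * tnorm2 (fun l => restr Om W l - restr Om Y l).
Proof.
move=> Z_Om; rewrite /tnorm2 /tdot !mulr_sumr -!sumrB; apply: ler_sum => l _.
rewrite /restr; case: ifP => lOm; last by rewrite Z_Om /restr lOm; lra.
set w := W l - Y l; have -> : W l = w + Y l by rewrite /w; ring.
have : 0 <= (2 * C * w + Z l) ^ 2 / (4 * C) by rewrite divr_ge0 ?sqr_ge0 // mulr_ge0 // ltW.
suff -> : (2 * C * w + Z l) ^ 2 / (4 * C) =
  C * (w * w) - (Z l * Y l - 1 / (4 * C) * (Z l * Z l) - Z l * (w + Y l)) by rewrite subr_ge0.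
by field; rewrite gt_eqF.
Qed.

Lemma dual_le_fit_plus Z S (Wk : 'I_K -> tensor R n) (t : 'I_K -> R) :
  dual_feasible Z S -> tnonneg (fun l => \sum_k Wk k l) ->
  (forall k, mxdot (unfold k (fun l => Z l + S l)) (unfold k (Wk k))
             - lam k / 2 * quadk k (fun l => Z l + S l) <= t k) ->
  dual Z S <= C * tnorm2 (fun l => restr Om (fun i => \sum_k Wk k i) l - restr Om Y l)
              + \sum_k t k.
Proof.
move=> [Z_Om S_ge0] W_ge0 le_t; rewrite dual_objE.
set X := fun l => Z l + S l; set W := fun l => \sum_k Wk k l.
have le_sum : tdot X W - \sum_k lam k / 2 * quadk k X <= \sum_k t k.
  rewrite /W tdot_sumr -sumrB; apply: ler_sum => k _.
  by rewrite -(mxdot_unfold k); exact: le_t.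
have SW_ge0 : 0 <= tdot S W.
  by apply: sumr_ge0 => l _; apply: mulr_ge0; [exact: S_ge0 | exact: W_ge0].
have := fit_fenchel_young W Z_Om; rewrite /X tdotDl in le_sum; lra.
Qed.

Lemma weak_duality Z S (Wk : 'I_K -> tensor R n) :
  dual_feasible Z S -> ((dual Z S)%:E <= primal Wk)%E.
Proof.
move=> ZS_feas; rewrite /primal_obj /=; case: asboolP => W_ge0; last by rewrite leey.
set X := fun l => Z l + S l.
pose t k := mxdot (unfold k X) (unfold k (Wk k)) - lam k / 2 * quadk k X.
apply: (@le_trans _ _ (C * tnorm2 (fun l => restr Om (fun i => \sum_k Wk k i) l
   - restr Om Y l) + \sum_k t k)%:E).
  by rewrite lee_fin; exact: dual_le_fit_plus.
rewrite EFinD -sumEFin; apply: leeD2l; apply: lee_sum => k _.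
rewrite /pinv_quad; case: ifP => range_W.
  by rewrite -EFinM lee_fin; exact: quad_fenchel_young.
by rewrite mulry gtr0_sg ?mul1e ?leey // divr_gt0 // mulr_gt0.
Qed.

Lemma dual_bounded : exists M, forall Z S, dual_feasible Z S -> dual Z S <= M.
Proof.
eexists => Z S ZS_feas; apply: dual_le_fit_plus (fun _ _ => 0) (fun=> 0) ZS_feas _ _.
  by move=> l; rewrite big1.
move=> k; rewrite mxdot_unfold tdotC tdot0l sub0r oppr_le0.
apply: mulr_ge0 (quadk_ge0 _ _); by rewrite divr_ge0 // ltW.
Qed.

(* A dual pair (Z, S) is a single vector on [idx n + idx n]: the dual objective
   is then the concave quadratic [qobj dual_H dual_b], and the dual feasible set
   a coordinate cone. *)
Definition tpair (Z S : tensor R n) (x : idx n + idx n) : R :=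
  match x with inl l => Z l | inr l => S l end.
Definition zpart (x : idx n + idx n -> R) : tensor R n := fun l => x (inl l).
Definition spart (x : idx n + idx n -> R) : tensor R n := fun l => x (inr l).
Definition xpart (x : idx n + idx n -> R) : tensor R n := fun l => zpart x l + spart x l.

Definition dual_bilin (x y : idx n + idx n -> R) :=
  1 / (4 * C) * tdot (zpart x) (zpart y) +
  \sum_k lam k / 2 * mxdot (unfold k (xpart x)) (Th k *m unfold k (xpart y)).
Definition dual_lin (x : idx n + idx n -> R) := tdot (zpart x) Y.

Lemma dual_bilinC x y : dual_bilin x y = dual_bilin y x.
Proof.
rewrite /dual_bilin tdotC; congr (_ + _); apply: eq_bigr => k _.
by rewrite mxdot_symmx.
Qed.

Lemma dual_bilinDl x y z :
  dual_bilin (fun j => x j + y j) z = dual_bilin x z + dual_bilin y z.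
Proof.
rewrite /dual_bilin.
have -> : xpart (fun j => x j + y j) = fun l => xpart x l + xpart y l.
  by apply/funext => l; rewrite /xpart /zpart /spart addrACA.
rewrite [zpart (fun j => _)]/zpart tdotDl.
under eq_bigr do rewrite unfoldD mxdotDl mulrDr.
by rewrite big_split /=; ring.
Qed.

Lemma dual_bilinZl a x z : dual_bilin (fun j => a * x j) z = a * dual_bilin x z.
Proof.
rewrite /dual_bilin.
have -> : xpart (fun j => a * x j) = fun l => a * xpart x l.
  by apply/funext => l; rewrite /xpart /zpart /spart mulrDr.
rewrite [zpart (fun j => _)]/zpart tdotZl.
under eq_bigr do rewrite unfoldZ mxdotZl mulrCA.
by rewrite -mulr_sumr; ring.
Qed.

Lemma dual_bilin_ge0 x : 0 <= dual_bilin x x.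
Proof.
have lam2_ge0 k : 0 <= lam k / 2 by rewrite divr_ge0 // ltW.
apply: addr_ge0.
  by apply: mulr_ge0; [rewrite divr_ge0 // mulr_ge0 // ltW | exact: tnorm2_ge0].
by apply: sumr_ge0 => k _; apply: mulr_ge0 (mxdot_psd_ge0 _ _).
Qed.

Definition dual_H i j := dual_bilin (delta i) (delta j).
Definition dual_b i := dual_lin (delta i).

Lemma dual_H_sym i j : dual_H i j = dual_H j i.
Proof. exact: dual_bilinC. Qed.

Lemma bform_dual x y : bform dual_H x y = dual_bilin x y.
Proof. exact: bform_coefE dual_bilinC dual_bilinDl dual_bilinZl x y. Qed.

Lemma lform_dual x : lform dual_b x = dual_lin x.
Proof. exact: lform_coefE (fun x y => tdotDl _ _ Y) (fun a x => tdotZl a _ Y) x. Qed.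

Lemma qobj_dual x : qobj dual_H dual_b x = dual (zpart x) (spart x).
Proof.
rewrite /qobj lform_dual bform_dual dual_objE /dual_lin /dual_bilin /tnorm2 /quadk /xpart.
by rewrite opprD addrA.
Qed.

Lemma dual_argmax : exists Zs Ss, dual_feasible Zs Ss /\
  forall Z S, dual_feasible Z S -> dual Z S <= dual Zs Ss.
Proof.
pose E : {set idx n + idx n} := [set x | if x is inl l then l \notin Om else false].
pose I : {set idx n + idx n} := [set x | if x is inr _ then true else false].
have cone_feas x : in_cone E I x -> dual_feasible (zpart x) (spart x).
  case=> xE xI; split=> [|l]; last by apply: xI; rewrite inE.
  apply/funext => l; rewrite /restr; case: ifPn => // lOm.
  by apply: xE; rewrite inE.
have feas_cone Z S : dual_feasible Z S -> in_cone E I (tpair Z S).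
  case=> Z_Om S_ge0; split=> -[l|l]; rewrite inE //= => lOm.
  by rewrite Z_Om /restr (negbTE lOm).
have bounded : exists M, forall x, in_cone E I x -> qobj dual_H dual_b x <= M.
  have [M dual_le] := dual_bounded.
  by exists M => x /cone_feas; rewrite qobj_dual; exact: dual_le.
have H_psd x : 0 <= bform dual_H x x by rewrite bform_dual dual_bilin_ge0.
have [xs /cone_feas xs_feas xs_max] :=
  qobj_cone_argmax dual_H_sym H_psd bounded.
exists (zpart xs), (spart xs); split=> // Z S /feas_cone/xs_max.
by rewrite !qobj_dual.
Qed.

Lemma tdot_primal_of k A X :
  tdot A (primal_of k X) = lam k * mxdot (unfold k A) (Th k *m unfold k X).
Proof. by rewrite /primal_of -(mxdot_unfold k) unfoldK mxdotZr. Qed.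

Definition dual_slope (Z S D E : tensor R n) :=
  tdot D Y - 1 / (2 * C) * tdot Z D
  - tdot (fun l => D l + E l) (primal_sum (fun l => Z l + S l)).

Lemma dual_slopeE Z S D E :
  dual_lin (tpair D E) - 2 * dual_bilin (tpair Z S) (tpair D E) = dual_slope Z S D E.
Proof.
rewrite /dual_slope /dual_lin /dual_bilin /primal_sum tdot_sumr mulrDr opprD addrA.
congr (_ - _ - _); first by rewrite mulrA; congr (_ * _); field; rewrite gt_eqF.
rewrite mulr_sumr; apply: eq_bigr => k _.
by rewrite tdot_primal_of mxdot_symmx // mulrA (mulrC 2) divfK.
Qed.

Lemma dual_shift Z S D E t :
  dual (fun l => Z l + t * D l) (fun l => S l + t * E l) =
  dual Z S + t * dual_slope Z S D E - t ^ 2 * dual_bilin (tpair D E) (tpair D E).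
Proof.
have := qobj_shift dual_b dual_H_sym (tpair Z S) t (tpair D E).
by rewrite !qobj_dual lform_dual !bform_dual dual_slopeE.
Qed.

Lemma pinv_quad_primal_of k X :
  ((1 / (2 * lam k))%:E * pinv_quad (Th k) (unfold k (primal_of k X)))%E =
  (lam k / 2 * quadk k X)%:E.
Proof.
rewrite /pinv_quad /primal_of unfoldK scalemxAr trmx_mul submxMl.
rewrite mxdot_MPinv_range // -EFinM -scalemxAr mxdotZl mxdotZr /quadk.
by congr EFin; field; rewrite gt_eqF.
Qed.

Section DualArgmax.
Variables Zs Ss : tensor R n.
Hypotheses (argmax_feas : dual_feasible Zs Ss)
  (argmax_max : forall Z S, dual_feasible Z S -> dual Z S <= dual Zs Ss).

Let V := primal_sum (fun l => Zs l + Ss l).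

Lemma argmax_slope_le0 D E :
  (forall t, 0 < t -> t <= 1 ->
     dual_feasible (fun l => Zs l + t * D l) (fun l => Ss l + t * E l)) ->
  dual_slope Zs Ss D E <= 0.
Proof.
move=> feas; apply: (slope_le0 (dual_bilin_ge0 (tpair D E))) => t t0 t1.
by have := argmax_max (feas t t0 t1); rewrite dual_shift; lra.
Qed.

Lemma argmax_slopeZ D : D = restr Om D ->
  tdot D Y - 1 / (2 * C) * tdot Zs D - tdot D V <= 0.
Proof.
move=> D_Om; have := @argmax_slope_le0 D (fun=> 0); rewrite /dual_slope.
have -> : (fun l => D l + 0) = D by apply/funext => l; rewrite addr0.
apply=> t _ _; split=> [|l]; last by rewrite mulr0 addr0; case: argmax_feas.
apply/funext => l; rewrite /restr; case: ifPn => // lOm.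
by rewrite argmax_feas.1 D_Om /restr (negbTE lOm) mulr0 addr0.
Qed.

Lemma argmax_slopeS E :
  (forall t, 0 < t -> t <= 1 -> tnonneg (fun l => Ss l + t * E l)) -> 0 <= tdot E V.
Proof.
move=> E_feas; have := @argmax_slope_le0 (fun=> 0) E; rewrite /dual_slope.
have -> : (fun l => 0 + E l) = E by apply/funext => l; rewrite add0r.
rewrite !tdot0l [tdot Zs _]tdotC tdot0l mulr0 subr0 sub0r oppr_le0.
apply=> t t0 t1; split; last exact: E_feas.
have -> : (fun l => Zs l + t * 0) = Zs by apply/funext => l; rewrite mulr0 addr0.
exact: argmax_feas.1.
Qed.

Lemma argmax_stationary l : l \in Om -> V l = Y l - Zs l / (2 * C).
Proof.
move=> lOm; have slope s : s * Y l - 1 / (2 * C) * (s * Zs l) - s * V l <= 0.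
  have := @argmax_slopeZ (fun i => s * delta l i).
  rewrite [tdot Zs _]tdotC !tdotZl !tdot_delta.
  apply; apply/funext => i; rewrite /restr; case: ifPn => // iOm.
  by rewrite /delta (_ : l == i = false) ?mulr0 //; apply: contraNF iOm => /eqP <-.
have := slope 1; have := slope (-1); lra.
Qed.

Lemma argmax_V_ge0 : tnonneg V.
Proof.
move=> l; rewrite -(tdot_delta l V); apply: argmax_slopeS => t t0 _ i.
by apply: addr_ge0; [exact: argmax_feas.2 | apply: mulr_ge0; [exact: ltW | exact: ler0n]].
Qed.

Lemma argmax_complementary : tdot Ss V = 0.
Proof.
have [_ Ss_ge0] := argmax_feas.
have slope s : -1 <= s -> 0 <= s * tdot Ss V.
  move=> s1; rewrite -tdotZl; apply: argmax_slopeS => t t0 t1 l.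
  have -> : Ss l + t * (s * Ss l) = (1 + t * s) * Ss l by ring.
  by apply: mulr_ge0 => //; nra.
have := slope 1; have := slope (-1); lra.
Qed.

Lemma argmax_fit :
  C * tnorm2 (fun l => restr Om V l - restr Om Y l) = 1 / (4 * C) * tnorm2 Zs.
Proof.
rewrite /tnorm2 /tdot !mulr_sumr; apply: eq_bigr => l _; rewrite /restr.
case: ifPn => lOm; first by rewrite argmax_stationary //; field; rewrite gt_eqF.
by rewrite argmax_feas.1 /restr (negbTE lOm); ring.
Qed.

Lemma argmax_tdot_V : tdot Zs V = tdot Zs Y - 1 / (2 * C) * tnorm2 Zs.
Proof.
rewrite /tnorm2 /tdot mulr_sumr -sumrB; apply: eq_bigr => l _.
case: (boolP (l \in Om)) => lOm.
  by rewrite argmax_stationary //; field; rewrite gt_eqF.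
by rewrite argmax_feas.1 /restr (negbTE lOm); ring.
Qed.

Lemma primal_of_argmax :
  primal (fun k => primal_of k (fun l => Zs l + Ss l)) = (dual Zs Ss)%:E.
Proof.
rewrite /primal_obj /= -/(primal_sum _) -/V asboolT; last exact: argmax_V_ge0.
under eq_bigr do rewrite pinv_quad_primal_of.
rewrite sumEFin -EFinD argmax_fit dual_objE; congr EFin.
have XV : tdot (fun l => Zs l + Ss l) V = tdot Zs V.
  by rewrite tdotDl argmax_complementary addr0.
have -> : \sum_k lam k / 2 * quadk k (fun l => Zs l + Ss l) = tdot Zs V / 2.
  rewrite -XV /V tdot_sumr mulr_suml.
  by apply: eq_bigr => k _; rewrite tdot_primal_of /quadk; field.
by rewrite argmax_tdot_V; field; rewrite gt_eqF.
Qed.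

End DualArgmax.

Lemma inner_duality : primal_inner Om Y C lam Th = dual_inner Om Y C lam Th.
Proof.
apply/eqP; rewrite eq_le; apply/andP; split.
  have [Zs [Ss [argmax_feas argmax_max]]] := dual_argmax.
  apply: (@le_trans _ _ (primal (fun k => primal_of k (fun l => Zs l + Ss l)))).
    by apply: ereal_inf_lbound; eexists.
  rewrite (primal_of_argmax argmax_feas argmax_max).
  by apply: ereal_sup_ubound; exists Zs, Ss; case: argmax_feas.
apply: ge_ereal_sup => _ [Z [S [Z_Om S_ge0 ->]]].
by apply: le_ereal_inf_tmp => _ [Wk ->]; exact: weak_duality.
Qed.

End InnerDuality.

Local Open Scope classical_set_scope.

Lemma ereal_inf_nested (R : realType) (A B : Type) (P : A -> Prop) (f : A -> B -> \bar R) :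
  ereal_inf [set x | exists a b, P a /\ x = f a b] =
  ereal_inf [set x | exists a, P a /\ x = ereal_inf [set y | exists b, y = f a b]].
Proof.
apply/eqP; rewrite eq_le; apply/andP; split.
  apply: le_ereal_inf_tmp => _ [a [Pa ->]]; apply: le_ereal_inf_tmp => _ [b ->].
  by apply: ereal_inf_lbound; exists a, b.
apply: le_ereal_inf_tmp => _ [a [b [Pa ->]]].
apply: le_trans (ereal_inf_lbound _) (ereal_inf_lbound _); [by exists a | by exists b].
Qed.

Theorem theorem2 (R : realType) (K : nat) (n : 'I_K -> nat)
  (Om : {set idx n}) (Y : tensor R n) (C : R) (lam : 'I_K -> R) :
  (0 < K)%N ->
  (forall k, 0 < n k)%N ->
  Y = restr Om Y ->
  0 < C ->
  (forall k, 0 < lam k) ->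
  (* for each fixed (Theta_k) in P^{n_1} x ... x P^{n_K}, the inner primal
     problem (min over W^(k)) and the inner partial dual (max over Z, S) agree *)
  (forall Th : forall k, 'M[R]_(n k), (forall k, Pset (Th k)) ->
     primal_inner Om Y C lam Th = dual_inner Om Y C lam Th) /\
  (* hence the primal problem and the min-max problem have the same optimal value *)
  ereal_inf [set x | exists (Th : forall k, 'M[R]_(n k)) (Wk : 'I_K -> tensor R n),
                (forall k, Pset (Th k)) /\ x = primal_obj Om Y C lam Th Wk]
  = ereal_inf [set x | exists Th : forall k, 'M[R]_(n k),
                (forall k, Pset (Th k)) /\ x = dual_inner Om Y C lam Th].
Proof.
move=> _ _ Y_Om C_gt0 lam_gt0.
have inner Th (Th_P : forall k, Pset (Th k)) := inner_duality Y_Om C_gt0 lam_gt0 Th_P.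
split=> //; rewrite ereal_inf_nested; congr ereal_inf; apply/funext => x; apply/propext.
by split=> -[Th [Th_P ->]]; exists Th; rewrite -(inner Th Th_P).
Qed.
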